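(* Let $\mathcal{S}=\{1,\dots,K\}$ be a finite set of settings. For each $i\in\mathcal{S}$ suppose $Y^i=\theta^iD^i+f^i(X^i,A^i)+\varepsilon^i$ with $E[\varepsilon^i\mid D^i,X^i,A^i]=0$ ($D^i$ real-valued treatment, $X^i$ observed, $A^i$ unobserved covariates), let $\theta^i_s$ be the short-regression parameter omitting $A^i$, let $B^i=\theta^i_s-\theta^i$, and assume $B^i\in[\nu^i_l,\nu^i_u]$ for known $\nu^i_l\le\nu^i_u$. For every pair $(j,k)$ assume $B^j=\rho^{jk}B^k$ with $\rho^{jk}\in[\rho^{jk}_l,\rho^{jk}_u]$, $0<\rho^{jk}_l\le1\le\rho^{jk}_u$ known. Define $\mathcal{I}^i=[\theta^i_s-\nu^i_u,\theta^i_s-\nu^i_l]$, $c^{jk}_l,c^{jk}_u$ as the min and max of $\{(\rho^{jk}_l-1)\nu^k_l,(\rho^{jk}_u-1)\nu^k_l,(\rho^{jk}_l-1)\nu^k_u,(\rho^{jk}_u-1)\nu^k_u\}$, and $\mathcal{I}^D_{jk}=[(\theta^j_s-\theta^k_s)-c^{jk}_u,(\theta^j_s-\theta^k_s)-c^{jk}_l]$. Then the true vector $(\theta^1,\dots,\theta^K)$ belongs to the polytope \[ \mathcal{J}=\{(\theta^1,\dots,\theta^K):\theta^i\in\mathcal{I}^i\ \forall i,\ \theta^j-\theta^k\in\mathcal{I}^D_{jk}\ \forall (j,k)\}, \] which is defined by at most $2K+K(K-1)$ linear inequality constraints in $K$ unknowns. The marginal identified set for any $\theta^i$ is the interval $[\underline{\theta}^i,\overline{\theta}^i]$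 with $\underline{\theta}^i=\min_{\mathcal{J}}\theta^i$ and $\overline{\theta}^i=\max_{\mathcal{J}}\theta^i$, each of which is the solution of a linear program.
   Context: The long parameter is $\theta^i=E[Y^i\alpha^i]$ with $\alpha^i=(D^i-E[D^i\mid X^i,A^i])/E[(D^i-E[D^i\mid X^i,A^i])^2]$, and the short parameter is $\theta^i_s=E[Y^i\alpha^i_s]$ with $\alpha^i_s=(D^i-E[D^i\mid X^i])/E[(D^i-E[D^i\mid X^i])^2]$. The marginal identified set for $\theta^i$ is the projection of $\mathcal{J}$ onto the $i$-th coordinate. *)

From mathcomp Require Import all_boot all_order all_algebra.
From mathcomp Require Import reals.
Set Implicit Arguments. Unset Strict Implicit. Unset Printing Implicit Defensive.
Import Order.TTheory GRing.Theory Num.Theory.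
Local Open Scope ring_scope.

(* Settings are indexed by 'I_K (= {1,...,K} shifted to {0,...,K-1}).
   Vectors (theta^1,...,theta^K) are functions 'I_K -> R. *)

Section Defs.
Variables (R : realType) (K : nat).
Variables (thetas : 'I_K -> R)
          (nul nuu : 'I_K -> R)
          (rhol rhou : 'I_K -> 'I_K -> R).

Definition c_l (j k : 'I_K) : R :=
  Num.min (Num.min ((rhol j k - 1) * nul k) ((rhou j k - 1) * nul k))
          (Num.min ((rhol j k - 1) * nuu k) ((rhou j k - 1) * nuu k)).
Definition c_u (j k : 'I_K) : R :=
  Num.max (Num.max ((rhol j k - 1) * nul k) ((rhou j k - 1) * nul k))
          (Num.max ((rhol j k - 1) * nuu k) ((rhou j k - 1) * nuu k)).

Definition in_I (i : 'I_K) (x : R) : Prop :=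
  thetas i - nuu i <= x <= thetas i - nul i.

Definition in_ID (j k : 'I_K) (x : R) : Prop :=
  (thetas j - thetas k) - c_u j k <= x <= (thetas j - thetas k) - c_l j k.

Definition J (t : 'I_K -> R) : Prop :=
  (forall i, in_I i (t i)) /\
  (forall j k, j != k -> in_ID j k (t j - t k)).

End Defs.

From mathcomp Require Import all_boot all_order all_algebra.
From mathcomp Require Import reals classical_sets boolp ring lra zify.
Set Implicit Arguments.
Unset Strict Implicit.
Unset Printing Implicit Defensive.

Import Order.TTheory GRing.Theory Num.Theory.
Local Open Scope ring_scope.
Local Open Scope classical_set_scope.

(* With rho and B^k in known intervals, (rho - 1) * B^k lies between the
   products of the interval endpoints; this puts the true vector in J.  J is a
   system of box constraints and difference constraints t_j - t_k <= d_jk, a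
   polyhedron with one row per bound and per ordered pair.  Such a system is
   closed under componentwise suprema (t_j <= t_k + d_jk <= sup t_k + d_jk) and,
   by the symmetry t |-> -t, under infima; so when nonempty it has a greatest
   and a least element, whose i-th coordinates are the attained endpoints of
   the projection, and convexity fills in the interval between them. *)

Section CornerBounds.
Variable R : realDomainType.

Lemma mulr_between_minmax (c a b r : R) : a <= r <= b ->
  Num.min (c * a) (c * b) <= c * r <= Num.max (c * a) (c * b).
Proof.
move=> /andP[ar rb]; have [c0|c0] := leP 0 c.
  have ca : c * a <= c * r by nra.
  have cb : c * r <= c * b by nra.
  by rewrite ge_min ca le_max cb orbT.
have ca : c * r <= c * a by nra.
have cb : c * b <= c * r by nra.
by rewrite ge_min cb orbT le_max ca.
Qed.

Lemma mulr_box_minmax (a b p q r x : R) : a <= r <= b -> p <= x <= q ->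
  Num.min (Num.min (a * p) (b * p)) (Num.min (a * q) (b * q)) <= r * x <=
  Num.max (Num.max (a * p) (b * p)) (Num.max (a * q) (b * q)).
Proof.
move=> hr hx.
have /andP[lo_r hi_r] := mulr_between_minmax x hr.
have /andP[lo_a hi_a] := mulr_between_minmax a hx.
have /andP[lo_b hi_b] := mulr_between_minmax b hx.
rewrite ![x * _]mulrC in lo_r hi_r.
set m := Num.min _ _; set M := Num.max _ _.
have [m_a m_b] : m <= Num.min (a * p) (a * q) /\ m <= Num.min (b * p) (b * q).
  by rewrite /m !le_min !ge_min !lexx !orbT.
have [a_M b_M] : Num.max (a * p) (a * q) <= M /\ Num.max (b * p) (b * q) <= M.
  by rewrite /M !ge_max !le_max !lexx !orbT.
apply/andP; split.
  by apply: le_trans lo_r; rewrite le_min (le_trans m_a) ?(le_trans m_b).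
by apply: le_trans hi_r _; rewrite ge_max (le_trans hi_a) ?(le_trans hi_b).
Qed.

End CornerBounds.

Section Polyhedra.
Variables (R : realFieldType) (I : finType).

Definition convex (P : set (I -> R)) :=
  forall u v lam, P u -> P v -> 0 <= lam <= 1 ->
  P (fun c => lam * u c + (1 - lam) * v c).

Definition polyhedron (T : finType) (A : T -> I -> R) (b : T -> R) : set (I -> R) :=
  [set t | forall r, \sum_c A r c * t c <= b r].

Lemma polyhedron_convex (T : finType) (A : T -> I -> R) b :
  convex (polyhedron A b).
Proof.
move=> u v lam Pu Pv /andP[lam0 lam1] r.
rewrite (eq_bigr (fun c => lam * (A r c * u c) + (1 - lam) * (A r c * v c)));
  last by move=> c _; ring.
rewrite big_split -!mulr_sumr /=.
have := ler_wpM2l lam0 (Pu r).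
have lam1_ge0 : 0 <= 1 - lam by rewrite subr_ge0.
have := ler_wpM2l lam1_ge0 (Pv r).
lra.
Qed.

Lemma polyhedron_enum (T : finType) (A : T -> I -> R) b :
  polyhedron A b =
  polyhedron (fun r : 'I_#|T| => A (enum_val r)) (fun r => b (enum_val r)).
Proof.
apply/seteqP; split=> t Pt r; first exact: Pt.
by rewrite -(enum_rankK r); apply: Pt.
Qed.

Lemma sum_coord (i : I) (t : I -> R) : \sum_c (c == i)%:R * t c = t i.
Proof.
rewrite (bigD1 i) //= eqxx mul1r big1 ?addr0 // => c /negbTE->.
by rewrite mul0r.
Qed.

Lemma convex_projection_interval (P : set (I -> R)) l u i x :
  convex P -> P l -> P u -> l i <= x <= u i -> exists t, P t /\ t i = x.
Proof.
move=> cP Pl Pu /andP[lx xu].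
have [li_ui|li_ui] := eqVneq (l i) (u i).
  by exists u; split=> //; apply/eqP; rewrite eq_le xu -li_ui lx.
have gap : 0 < u i - l i by rewrite subr_gt0 lt_neqAle li_ui (le_trans lx xu).
pose lam := (x - l i) / (u i - l i).
exists (fun c => lam * u c + (1 - lam) * l c); split; last first.
  by rewrite /lam; field; rewrite gt_eqF.
apply: cP => //; apply/andP; split; first by rewrite divr_ge0 //; lra.
rewrite ler_pdivrMr // mul1r.
lra.
Qed.

End Polyhedra.

Section DifferenceConstraints.
Variables (R : realType) (K : nat).

Definition diff_system (lo hi : 'I_K -> R) (d : 'I_K -> 'I_K -> R) :
    set ('I_K -> R) :=
  [set t | (forall i, lo i <= t i <= hi i) /\
           (forall j k, j != k -> t j - t k <= d j k)].

(* An ordered pair j != k is encoded as (j, m) with k = lift j m. *)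
Definition diff_row := ('I_K + 'I_K + 'I_K * 'I_K.-1)%type.

Definition diff_coef (x : diff_row) : 'I_K -> R :=
  match x with
  | inl (inl i) => fun c => - (c == i)%:R
  | inl (inr i) => fun c => (c == i)%:R
  | inr (j, m) => fun c => (c == j)%:R - (c == lift j m)%:R
  end.

Definition diff_rhs lo hi d (x : diff_row) : R :=
  match x with
  | inl (inl i) => - lo i
  | inl (inr i) => hi i
  | inr (j, m) => d j (lift j m)
  end.

Lemma card_diff_row : #|{: diff_row}| = (2 * K + K * (K - 1))%N.
Proof. rewrite !card_sum card_prod !card_ord; lia. Qed.

Lemma diff_row_sum x (t : 'I_K -> R) :
  \sum_c diff_coef x c * t c =
  match x with
  | inl (inl i) => - t i
  | inl (inr i) => t i
  | inr (j, m) => t j - t (lift j m)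
  end.
Proof.
case: x => [[i|i]|[j m]] /=; last under eq_bigr do rewrite mulrBl.
- by under eq_bigr do rewrite mulNr; rewrite sumrN sum_coord.
- exact: sum_coord.
- by rewrite sumrB !sum_coord.
Qed.

Lemma diff_system_polyhedron lo hi d :
  diff_system lo hi d = polyhedron diff_coef (diff_rhs lo hi d).
Proof.
apply/seteqP; split=> t.
  case=> box diff x; rewrite diff_row_sum.
  case: x => [[i|i]|[j m]] /=.
  - by rewrite lerN2; case/andP: (box i).
  - by case/andP: (box i).
  - exact: diff (neq_lift j m).
move=> Pt; split.
  move=> i; have := Pt (inl (inl i)); have := Pt (inl (inr i)).
  by rewrite !diff_row_sum /= lerN2 => -> ->.
move=> j k; case: (unliftP j k) => [m ->|-> /eqP//] _.
by have := Pt (inr (j, m)); rewrite diff_row_sum.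
Qed.

Lemma diff_system_rows lo hi d :
  exists (n : nat) (A : 'I_n -> 'I_K -> R) (b : 'I_n -> R),
    (n <= 2 * K + K * (K - 1))%N /\
    forall t, diff_system lo hi d t <-> polyhedron A b t.
Proof.
rewrite diff_system_polyhedron polyhedron_enum -card_diff_row.
by exists #|{: diff_row}|, (fun r => diff_coef (enum_val r)),
  (fun r => diff_rhs lo hi d (enum_val r)).
Qed.

Lemma diff_system_convex lo hi d : convex (diff_system lo hi d).
Proof. by rewrite diff_system_polyhedron; apply: polyhedron_convex. Qed.

Lemma diff_system_greatest lo hi d t0 : diff_system lo hi d t0 ->
  exists2 u, diff_system lo hi d u &
    forall t, diff_system lo hi d t -> forall c, t c <= u c.
Proof.
move=> P0; pose S c := [set t c | t in diff_system lo hi d].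
have S_ub c : has_ubound (S c).
  by exists (hi c) => _ [t [box _] <-]; case/andP: (box c).
have t_le_sup c t : diff_system lo hi d t -> t c <= sup (S c).
  by move=> Pt; apply: ub_le_sup => //; exists t.
have sup_le c y : (forall t, diff_system lo hi d t -> t c <= y) -> sup (S c) <= y.
  by move=> ty; apply: ge_sup => [|_ [t Pt <-]]; [exists (t0 c), t0 | apply: ty].
exists (fun c => sup (S c)); last by move=> t Pt c; apply: t_le_sup.
split=> [i|j k jk].
  apply/andP; split; last by apply: sup_le => t [box _]; case/andP: (box i).
  by have /andP[lo_t0 _] := P0.1 i; apply: le_trans lo_t0 (t_le_sup i t0 P0).
suff: sup (S j) <= sup (S k) + d j k by lra.
apply: sup_le => t Pt; have := Pt.2 j k jk; have := t_le_sup k t Pt; lra.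
Qed.

Lemma diff_system_opp lo hi d t : diff_system lo hi d t ->
  diff_system (fun i => - hi i) (fun i => - lo i) (fun j k => d k j)
    (fun c => - t c).
Proof.
case=> box diff; split=> [i|j k jk].
  by case/andP: (box i) => lo_t t_hi; rewrite !lerN2 t_hi lo_t.
by rewrite opprK addrC; apply: diff; rewrite eq_sym.
Qed.

Lemma diff_system_least lo hi d t0 : diff_system lo hi d t0 ->
  exists2 l, diff_system lo hi d l &
    forall t, diff_system lo hi d t -> forall c, l c <= t c.
Proof.
move=> /diff_system_opp/diff_system_greatest[u Pu u_max].
exists (fun c => - u c); last first.
  by move=> t /diff_system_opp Pt c; rewrite lerNl; exact: u_max Pt c.
have oppK (f : 'I_K -> R) : (fun i => - - f i) = f by apply/funext => i; rewrite opprK.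
by have := diff_system_opp Pu; rewrite !oppK.
Qed.

Lemma diff_system_marginal lo hi d t0 : diff_system lo hi d t0 ->
  forall i : 'I_K, exists lo_i hi_i : R,
    (exists t, diff_system lo hi d t /\ t i = lo_i) /\
    (forall t, diff_system lo hi d t -> lo_i <= t i) /\
    (exists t, diff_system lo hi d t /\ t i = hi_i) /\
    (forall t, diff_system lo hi d t -> t i <= hi_i) /\
    (forall x : R, (exists t, diff_system lo hi d t /\ t i = x) <->
                   lo_i <= x <= hi_i).
Proof.
move=> P0 i; have [u Pu u_max] := diff_system_greatest P0.
have [l Pl l_min] := diff_system_least P0.
exists (l i), (u i); split; first by exists l.
split; first by move=> t /l_min.
split; first by exists u.
split; first by move=> t /u_max.
move=> x; split=> [[t [Pt <-]]|]; first by rewrite l_min ?u_max.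
exact: convex_projection_interval (@diff_system_convex lo hi d) Pl Pu.
Qed.

End DifferenceConstraints.

Section BoundsModel.
Variables (R : realType) (K : nat) (thetas nul nuu : 'I_K -> R)
  (rhol rhou : 'I_K -> 'I_K -> R).

Local Notation J := (J thetas nul nuu rhol rhou).
Local Notation c_l := (c_l nul nuu rhol rhou).
Local Notation c_u := (c_u nul nuu rhol rhou).

Lemma in_ID_true (theta : 'I_K -> R) j k rho :
  nul k <= thetas k - theta k <= nuu k -> rhol j k <= rho <= rhou j k ->
  thetas j - theta j = rho * (thetas k - theta k) ->
  in_ID thetas nul nuu rhol rhou j k (theta j - theta k).
Proof.
move=> Bk /andP[rho_l rho_u] Bj.
have rho1 : rhol j k - 1 <= rho - 1 <= rhou j k - 1 by apply/andP; split; lra.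
have /andP[lo hi] := mulr_box_minmax rho1 Bk.
rewrite /in_ID /c_l /c_u; apply/andP; split; lra.
Qed.

Lemma J_true (theta : 'I_K -> R) :
  (forall i, nul i <= thetas i - theta i <= nuu i) ->
  (forall j k, exists rho, rhol j k <= rho <= rhou j k /\
     thetas j - theta j = rho * (thetas k - theta k)) ->
  J theta.
Proof.
move=> B Brel; split=> [i | j k _].
  by have /andP[Bl Bu] := B i; apply/andP; split; lra.
by have [rho [rho_jk Bj]] := Brel j k; apply: in_ID_true Bj.
Qed.

Lemma J_diff_system :
  J = diff_system (fun i => thetas i - nuu i) (fun i => thetas i - nul i)
        (fun j k => Num.min (thetas j - thetas k - c_l j k)
                            (c_u k j - (thetas k - thetas j))).
Proof.
apply/seteqP; split=> t [box diff]; split=> // j k jk;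
  have kj : k != j by rewrite eq_sym.
- have /andP[lo_jk hi_jk] := diff j k jk; have /andP[lo_kj hi_kj] := diff k j kj.
  by rewrite le_min; apply/andP; split; lra.
- have := diff j k jk; have := diff k j kj; rewrite !le_min.
  by move=> /andP[? ?] /andP[? ?]; apply/andP; split; lra.
Qed.

End BoundsModel.

Theorem proposition4 (R : realType) (K : nat)
    (theta thetas : 'I_K -> R)
    (nul nuu : 'I_K -> R) (rhol rhou : 'I_K -> 'I_K -> R)
    (* known bounds on the biases *)
    (hnu : forall i, nul i <= nuu i)
    (hB : forall i, nul i <= thetas i - theta i <= nuu i)
    (* known bounds on the relative-bias ratios *)
    (hrho : forall j k, 0 < rhol j k /\ rhol j k <= 1 /\ 1 <= rhou j k)
    (hBrel : forall j k : 'I_K, exists rho : R,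
        rhol j k <= rho <= rhou j k /\
        thetas j - theta j = rho * (thetas k - theta k)) :
  (* the true vector lies in J *)
  J thetas nul nuu rhol rhou theta /\
  (* J is described by at most 2K + K(K-1) linear inequalities *)
  (exists (n : nat) (A : 'I_n -> 'I_K -> R) (b : 'I_n -> R),
      (n <= 2 * K + K * (K - 1))%N /\
      forall t, J thetas nul nuu rhol rhou t <->
                (forall r, \sum_(c < K) A r c * t c <= b r)) /\
  (* marginal identified sets: projections of J are [min_J theta^i, max_J theta^i] *)
  (forall i : 'I_K, exists lo hi : R,
      (exists t, J thetas nul nuu rhol rhou t /\ t i = lo) /\
      (forall t, J thetas nul nuu rhol rhou t -> lo <= t i) /\
      (exists t, J thetas nul nuu rhol rhou t /\ t i = hi) /\
      (forall t, J thetas nul nuu rhol rhou t -> t i <= hi) /\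
      (forall x : R, (exists t, J thetas nul nuu rhol rhou t /\ t i = x) <->
                     lo <= x <= hi)).
Proof.
have Jtheta := J_true hB hBrel.
rewrite J_diff_system in Jtheta *.
split; first exact: Jtheta.
split; first exact: diff_system_rows.
exact: diff_system_marginal Jtheta.
Qed.
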